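(* Let $J=p\ge1$, $\sigma_\varepsilon^2>0$, $\sigma_\gamma^2>0$, $0\le\rho\le1$, and let $\mathbf{\Sigma}_\gamma$ be the autoregressive covariance matrix with entries $(\mathbf{\Sigma}_\gamma)_{jj'}=\sigma_\gamma^2\rho^{|j-j'|}$. Let $\mathbf{A}_{\bm\beta}$ be a nonsingular $J\times J$ matrix and $I>0$. For an approximate design $\xi=(I_1,\dots,I_J)$ (reals $I_j\ge0$ with $\sum_jI_j=I$) let $$\mathbf{M}_{\bm\beta}(\xi)=\mathbf{A}_{\bm\beta}^{\mathrm T}\mathbf{M}_0(\xi)^{1/2}\big(\sigma_\varepsilon^2\mathbf{I}_J+\mathbf{M}_0(\xi)^{1/2}\mathbf{\Sigma}_\gamma\mathbf{M}_0(\xi)^{1/2}\big)^{-1}\mathbf{M}_0(\xi)^{1/2}\mathbf{A}_{\bm\beta},\quad \mathbf{M}_0(\xi)^{1/2}=\mathrm{diag}(\sqrt{I_1},\dots,\sqrt{I_J}).$$ Then the $D$-optimal approximate design $\xi^*=(I_1^*,\dots,I_J^* )$ is symmetric in time, i.e. $I_j^*=I_{J-j+1}^*$ for all $j=1,\dots,J$.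
   Context: $\mathbf{A}_{\bm\beta}$ is the Jacobian of the mean response curve at a fixed parameter $\bm\beta$. $\bm\beta$ is estimable under $\xi$ if $\mathbf{A}_{\bm\beta}$ has full column rank and its columns lie in the column space of $\mathrm{diag}(I_1,\dots,I_J)$. A design $\xi^*$ is $D$-optimal if $\log\det\mathbf{M}_{\bm\beta}(\xi^* )\ge\log\det\mathbf{M}_{\bm\beta}(\xi)$ for all approximate designs $\xi$ with total $I$ under which $\bm\beta$ is estimable. *)

From HB Require Import structures.
From mathcomp Require Import all_boot all_order all_algebra.
From mathcomp Require Import all_classical all_reals all_analysis.
Set Implicit Arguments. Unset Strict Implicit. Unset Printing Implicit Defensive.
Import Order.TTheory GRing.Theory Num.Theory.
Local Open Scope ring_scope.

Section Design.
Variables (R : realType) (J : nat).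

Definition Sigma_gamma (sg2 rho : R) : 'M[R]_J :=
  \matrix_(i < J, k < J) (sg2 * rho ^+ (maxn i k - minn i k)%N).

Definition is_design (I : R) (xi : 'I_J -> R) : Prop :=
  (forall j, 0 <= xi j) /\ \sum_(j < J) xi j = I.

Definition M0 (xi : 'I_J -> R) : 'M[R]_J := diag_mx (\row_j xi j).
Definition M0half (xi : 'I_J -> R) : 'M[R]_J := diag_mx (\row_j Num.sqrt (xi j)).

Definition Minfo (A : 'M[R]_J) (se2 sg2 rho : R) (xi : 'I_J -> R) : 'M[R]_J :=
  A^T *m M0half xi
      *m invmx (se2%:M + M0half xi *m Sigma_gamma sg2 rho *m M0half xi)
      *m M0half xi *m A.

Definition estimable (A : 'M[R]_J) (xi : 'I_J -> R) : Prop :=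
  \rank A = J /\ (A^T <= (M0 xi)^T)%MS.

Definition D_optimal (A : 'M[R]_J) (se2 sg2 rho I : R) (xi : 'I_J -> R) : Prop :=
  [/\ is_design I xi, estimable A xi &
      forall xi' : 'I_J -> R, is_design I xi' -> estimable A xi' ->
        ln (\det (Minfo A se2 sg2 rho xi')) <= ln (\det (Minfo A se2 sg2 rho xi))].

End Design.

From HB Require Import structures.
From mathcomp Require Import all_boot all_order all_algebra.
From mathcomp Require Import all_classical all_reals all_analysis.
From mathcomp Require Import ring lra zify.
From mathcomp Require Import fingroup perm.
Import Order.TTheory GRing.Theory Num.Theory.
Local Open Scope ring_scope.
Set Implicit Arguments. Unset Strict Implicit. Unset Printing Implicit Defensive.

(* The information determinant is [det A ^ 2 / det W(xi)] with
   [W(xi) = diag(se2 / xi_j) + Sigma_gamma], so a D-optimal design minimises [det W].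
   Expanding [det W] in the principal minors of the positive semidefinite [Sigma_gamma]
   writes it as a nonnegative combination of products of the log-convex functions
   [se2 / xi_j], the full product having coefficient 1; hence [det W] is strictly
   midpoint convex.  As [Sigma_gamma] is persymmetric, [det W] is invariant under time
   reversal, so the midpoint of an optimal design and its reversal would be strictly
   better unless the two coincide. *)

Section PrincipalMinors.
Variable R : comPzRingType.

(* Padding with the identity makes [\det (principal_mx T K)] the principal minor of [T] on [K]. *)
Definition principal_mx n (T : 'M[R]_n) (K : {set 'I_n}) : 'M[R]_n :=
  \matrix_(i, j) if (i \in K) && (j \in K) then T i j else (i == j)%:R.

Lemma principal_mx_set0 n (T : 'M[R]_n) : principal_mx T finset.set0 = 1%:M.
Proof. by apply/matrixP => i j; rewrite !mxE finset.in_set0. Qed.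

Lemma det_diag_add n (d : 'rV[R]_n) (T : 'M[R]_n) :
  \det (diag_mx d + T) = \sum_(K : {set 'I_n}) (\prod_(i in ~: K) d 0 i) * \det (principal_mx T K).
Proof.
rewrite /determinant.
transitivity (\sum_(p : 'S_n) \sum_(K : {set 'I_n}) (-1) ^+ p *
   \prod_i (if i \in K then T i (p i) else d 0 i *+ (i == p i))).
  apply: eq_bigr => p _; rewrite -big_distrr /=; congr (_ * _).
  under eq_bigr => i _ do rewrite !mxE addrC.
  by rewrite bigA_distr.
rewrite exchange_big; apply: eq_bigr => K _ /=.
rewrite big_distrr; apply: eq_bigr => p _ /=.
rewrite mulrCA; congr (_ * _).
(* only permutations fixing every index outside [K] contribute to the [K]-th term *)
have [fixK|] := boolP [forall i in ~: K, p i == i]; last first.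
  case/forall_inPn => i; rewrite inE => iK ne.
  rewrite (bigD1 i) //= (negPf iK) eq_sym (negPf ne) mulr0n mul0r.
  by rewrite [X in _ * X](bigD1 i) //= mxE (negPf iK) eq_sym (negPf ne) mul0r mulr0.
have fixK' i : i \notin K -> p i = i.
  by move=> iK; apply/eqP; move/forall_inP: fixK; apply; rewrite inE.
have stabK i : i \in K -> p i \in K.
  by move=> iK; apply: contraT => piK; move: iK; rewrite -(perm_inj (fixK' _ piK)) (negPf piK).
rewrite (bigID (mem K)) [X in _ = _ * X](bigID (mem K)) /= mulrCA; congr (_ * _).
  by apply: eq_bigr => i iK; rewrite mxE iK stabK.
rewrite [X in _ = _ * X]big1 ?mulr1 => [|i iK]; last by rewrite mxE (negPf iK) fixK' // eqxx.
apply: eq_big => [i|i iK]; first by rewrite inE.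
by rewrite (negPf iK) fixK' // eqxx.
Qed.

Lemma det_row_col_perm n (s : 'S_n) (M : 'M[R]_n) :
  \det (row_perm s (col_perm s M)) = \det M.
Proof.
rewrite row_permE col_permE !det_mulmx !det_perm odd_permV.
by rewrite mulrCA -expr2 sqrr_sign mulr1.
Qed.

End PrincipalMinors.

Section Psd.
Variable R : realFieldType.

Definition psd n (M : 'M[R]_n) :=
  M^T = M /\ forall u : 'rV[R]_n, 0 <= (u *m M *m u^T) 0 0.

Lemma psd_congr n (T G : 'M[R]_n) : psd T -> psd (G^T *m T *m G).
Proof.
move=> [Tsym Tpos]; split; first by rewrite !trmx_mul trmxK Tsym mulmxA.
by move=> u; have := Tpos (u *m G^T); rewrite trmx_mul trmxK !mulmxA.
Qed.

Lemma psd_add n (A B : 'M[R]_n) : psd A -> psd B -> psd (A + B).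
Proof.
move=> [Asym Apos] [Bsym Bpos]; split; first by rewrite linearD /= Asym Bsym.
by move=> u; rewrite mulmxDr mulmxDl mxE addr_ge0.
Qed.

Lemma psd_scale n c (A : 'M[R]_n) : 0 <= c -> psd A -> psd (c *: A).
Proof.
move=> c0 [Asym Apos]; split; first by rewrite linearZ /= Asym.
by move=> u; rewrite -scalemxAr -scalemxAl mxE mulr_ge0.
Qed.

Lemma psd_diag n (d : 'rV[R]_n) : (forall i, 0 <= d 0 i) -> psd (diag_mx d).
Proof.
move=> d0; split; first exact: tr_diag_mx.
move=> u; rewrite mul_mx_diag mxE; apply: sumr_ge0 => i _.
by rewrite !mxE mulrAC -expr2 mulr_ge0 ?sqr_ge0.
Qed.

Lemma psd_principal_mx n (T : 'M[R]_n) K : psd T -> psd (principal_mx T K).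
Proof.
pose P := diag_mx (\row_i (i \in K)%:R : 'rV[R]_n).
have -> : principal_mx T K = P^T *m T *m P + diag_mx (\row_i (i \notin K)%:R).
  apply/matrixP => i j; rewrite tr_diag_mx mul_diag_mx mul_mx_diag !mxE.
  case: (boolP (i \in K)) => iK; case: (boolP (j \in K)) => jK /=;
    rewrite ?mul1r ?mulr1 ?mul0r ?mulr0 ?mul0rn ?add0r ?addr0 //.
  by case: eqP => // eij; rewrite eij (negPf jK) in iK.
move=> Tpsd; apply: psd_add; first exact: psd_congr.
by apply: psd_diag => i; rewrite mxE ler0n.
Qed.

Lemma quad_block_mx n (a : 'M[R]_1) (b : 'M[R]_(1, n)) (D : 'M[R]_n) t (v : 'rV[R]_n) :
  (row_mx (t%:M : 'M[R]_1) v *m block_mx a b b^T D *m (row_mx (t%:M : 'M[R]_1) v)^T) 0 0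
  = t * t * a 0 0 + 2 * t * (b *m v^T) 0 0 + (v *m D *m v^T) 0 0.
Proof.
rewrite mul_row_block tr_row_mx mul_row_col tr_scalar_mx.
rewrite !mulmxDl !mul_scalar_mx !mul_mx_scalar -!scalemxAl.
have -> : v *m b^T = (b *m v^T)^T by rewrite trmx_mul trmxK.
rewrite !mxE /=; lra.
Qed.

Section SchurComplement.
Variables (n : nat) (a : 'M[R]_1) (b : 'M[R]_(1, n)) (D : 'M[R]_n).
Hypothesis psdM : psd (block_mx a b b^T D).

Let quad_ge0 t (v : 'rV[R]_n) : 0 <= t * t * a 0 0 + 2 * t * (b *m v^T) 0 0 + (v *m D *m v^T) 0 0.
Proof. by rewrite -quad_block_mx; apply: psdM.2. Qed.

Lemma psd_corner_ge0 : 0 <= a 0 0.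
Proof. by have := quad_ge0 1 0; rewrite trmx0 !mulmx0 !mxE; lra. Qed.

Lemma psd_corner0 : a 0 0 = 0 -> b = 0.
Proof.
move=> a0; apply/matrixP => i j; rewrite [i]ord1 [RHS]mxE.
pose v := delta_mx 0 j : 'rV[R]_n.
have bv : (b *m v^T) 0 0 = b 0 j by rewrite trmx_delta -colE mxE.
set g := (v *m D *m v^T) 0 0.
have g0 : 0 <= g by have := quad_ge0 0 v; rewrite a0 bv -/g !(mul0r, mulr0, add0r).
apply/eqP; apply: contraT => bj0.
(* [t |-> 2 t b_j + g] stays nonnegative only if [b_j = 0]: try [t = - (g + 1) / (2 b_j)] *)
have := quad_ge0 (- (g + 1) / (2 * b 0 j)) v; rewrite a0 bv -/g.
have -> : 2 * (- (g + 1) / (2 * b 0 j)) * b 0 j = - (g + 1) by field.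
lra.
Qed.

Lemma psd_schur : 0 < a 0 0 -> psd (D - (a 0 0)^-1 *: (b^T *m b)).
Proof.
move=> a0; split.
  case: psdM; rewrite tr_block_mx => /eq_block_mx[_ _ _ Dsym] _.
  by rewrite linearB /= linearZ /= trmx_mul trmxK Dsym.
move=> v; set beta := (b *m v^T) 0 0.
have -> : (v *m (D - (a 0 0)^-1 *: (b^T *m b)) *m v^T) 0 0
    = (v *m D *m v^T) 0 0 - (a 0 0)^-1 * beta ^+ 2.
  rewrite mulmxBr mulmxBl -scalemxAr -scalemxAl [LHS]mxE; congr (_ + _).
  rewrite mxE mxE mulmxA -(mulmxA (v *m b^T)) mxE big_ord1 expr2; congr (- (_ * (_ * _))).
  by rewrite -(trmxK (v *m b^T)) trmx_mul trmxK mxE.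
have := quad_ge0 (- (a 0 0)^-1 * beta) v; rewrite -/beta.
have -> : - (a 0 0)^-1 * beta * (- (a 0 0)^-1 * beta) * a 0 0 + 2 * (- (a 0 0)^-1 * beta) * beta
   = - ((a 0 0)^-1 * beta ^+ 2) by field; rewrite gt_eqF.
lra.
Qed.

End SchurComplement.

Lemma det_schur n (a : 'M[R]_1) (b : 'M[R]_(1, n)) (D : 'M[R]_n) : a 0 0 != 0 ->
  \det (block_mx a b b^T D) = a 0 0 * \det (D - (a 0 0)^-1 *: (b^T *m b)).
Proof.
set al := a 0 0 => al0.
pose E : 'M[R]_(1 + n) := block_mx 1%:M 0 (- al^-1 *: b^T) 1%:M.
have EM : E *m block_mx a b b^T D = block_mx a b 0 (D - al^-1 *: (b^T *m b)).
  rewrite mulmx_block !mul1mx !mul0mx !addr0; congr block_mx.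
    by rewrite [a]mx11_scalar -/al mul_mx_scalar scalerA mulrN divff // scaleN1r addNr.
  by rewrite -scalemxAl scaleNr addrC.
have detE : \det E = 1 by rewrite det_lblock !det1 mulr1.
by rewrite -[LHS]mul1r -detE -det_mulmx EM det_ublock det_mx11.
Qed.

Lemma psd_det_ge0 n (M : 'M[R]_n) : psd M -> 0 <= \det M.
Proof.
elim: n M => [|n IH] M; first by rewrite det_mx00.
move: M; rewrite -[n.+1]/(1 + n)%N => M; rewrite -(submxK M) => Mpsd.
have Mdl : dlsubmx M = (ursubmx M)^T.
  by case: Mpsd; rewrite tr_block_mx => /eq_block_mx[_ _ <- _].
rewrite Mdl in Mpsd *.
have [a0|] := ltrP 0 (ulsubmx M 0 0); last first.
  move=> ale0; have a0 : ulsubmx M 0 0 = 0 by apply/le_anti; rewrite ale0 (psd_corner_ge0 Mpsd).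
  by rewrite (psd_corner0 Mpsd a0) det_lblock det_mx11 a0 mul0r.
rewrite det_schur ?gt_eqF //; apply: mulr_ge0 (ltW a0) _.
exact: IH (psd_schur Mpsd a0).
Qed.

Lemma det_diag_add_gt0 n (d : 'rV[R]_n) (T : 'M[R]_n) :
  psd T -> (forall i, 0 < d 0 i) -> 0 < \det (diag_mx d + T).
Proof.
move=> Tpsd d0; rewrite det_diag_add (bigD1 finset.set0) //= principal_mx_set0 det1 mulr1.
apply: ltr_wpDr; last by rewrite finset.setC0 prodr_gt0.
apply: sumr_ge0 => K _; apply: mulr_ge0; last exact/psd_det_ge0/psd_principal_mx.
by apply: prodr_ge0 => i _; apply: ltW.
Qed.

End Psd.

Section MidpointConvexity.
Variable R : realFieldType.

Definition mid (T : Type) (x y : T -> R) (i : T) : R := (x i + y i) / 2.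

Lemma amgm_le (h X Y : R) : 0 <= h -> 0 < X -> 0 < Y -> h ^+ 2 <= X * Y -> 2 * h <= X + Y.
Proof. by move=> h0 X0 Y0 hXY; have := sqr_ge0 (X - Y); nra. Qed.

Lemma amgm_lt (h X Y : R) : 0 <= h -> 0 < X -> 0 < Y -> h ^+ 2 < X * Y -> 2 * h < X + Y.
Proof. by move=> h0 X0 Y0 hXY; have := sqr_ge0 (X - Y); nra. Qed.

Section Products.
Variables (I : finType) (P : pred I) (f g h : I -> R).
Hypotheses (h_ge0 : forall i, 0 <= h i) (f_gt0 : forall i, 0 < f i) (g_gt0 : forall i, 0 < g i).
Hypothesis h_le : forall i, h i ^+ 2 <= f i * g i.

Let amgm_prod_hyps :
  [/\ 0 <= \prod_(i | P i) h i, 0 < \prod_(i | P i) f i & 0 < \prod_(i | P i) g i].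
Proof. by split; [apply: prodr_ge0 | apply: prodr_gt0 | apply: prodr_gt0] => i _. Qed.

Lemma prod_midpoint_le :
  2 * \prod_(i | P i) h i <= \prod_(i | P i) f i + \prod_(i | P i) g i.
Proof.
have [? ? ?] := amgm_prod_hyps; apply: amgm_le => //; rewrite -prodrXl -big_split /=.
by apply: ler_prod => i _; rewrite sqr_ge0 h_le.
Qed.

Lemma prod_midpoint_lt j : P j -> h j ^+ 2 < f j * g j ->
  2 * \prod_(i | P i) h i < \prod_(i | P i) f i + \prod_(i | P i) g i.
Proof.
move=> Pj hj; have [? ? ?] := amgm_prod_hyps; apply: amgm_lt => //; rewrite -prodrXl -big_split /=.
rewrite (bigD1 j) // [X in _ < X](bigD1 j) //=.
have rest : \prod_(i | P i && (i != j)) h i ^+ 2 <= \prod_(i | P i && (i != j)) (f i * g i).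
  by apply: ler_prod => i _; rewrite sqr_ge0 h_le.
have rest_gt0 : 0 < \prod_(i | P i && (i != j)) (f i * g i).
  by apply: prodr_gt0 => i _; rewrite mulr_gt0.
by apply: (le_lt_trans (ler_wpM2l (sqr_ge0 _) rest)); rewrite ltr_pM2r.
Qed.

End Products.

Lemma sqr_div_mid_gap (c a b : R) : 0 < a -> 0 < b ->
  c / a * (c / b) - (c / ((a + b) / 2)) ^+ 2 = c ^+ 2 * (a - b) ^+ 2 / (a * b * (a + b) ^+ 2).
Proof.
move=> a0 b0; have ab0 : a + b != 0 by rewrite gt_eqF ?addr_gt0.
by field; rewrite ab0 !gt_eqF.
Qed.

Lemma sqr_div_mid_le (c a b : R) : 0 < a -> 0 < b -> (c / ((a + b) / 2)) ^+ 2 <= c / a * (c / b).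
Proof.
move=> a0 b0; rewrite -subr_ge0 sqr_div_mid_gap //.
have den : 0 < a * b * (a + b) ^+ 2 by rewrite !mulr_gt0 ?addr_gt0.
exact: divr_ge0 (mulr_ge0 (sqr_ge0 _) (sqr_ge0 _)) (ltW den).
Qed.

Lemma sqr_div_mid_lt (c a b : R) : 0 < c -> 0 < a -> 0 < b -> a != b ->
  (c / ((a + b) / 2)) ^+ 2 < c / a * (c / b).
Proof.
move=> c0 a0 b0 ab; rewrite -subr_gt0 sqr_div_mid_gap //.
have den : 0 < a * b * (a + b) ^+ 2 by rewrite !mulr_gt0 ?addr_gt0.
apply: divr_gt0 (mulr_gt0 (exprn_gt0 _ c0) _) den.
by rewrite lt_def sqr_ge0 andbT sqrf_eq0 subr_eq0.
Qed.

Definition diag_inv n (c : R) (x : 'I_n -> R) : 'M[R]_n := diag_mx (\row_i (c / x i)).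

Lemma det_diag_inv_add_mid_lt n (T : 'M[R]_n) c (x y : 'I_n -> R) j :
  psd T -> 0 < c -> (forall i, 0 < x i) -> (forall i, 0 < y i) -> x j != y j ->
  2 * \det (diag_inv c (mid x y) + T) < \det (diag_inv c x + T) + \det (diag_inv c y + T).
Proof.
move=> Tpsd c0 x0 y0 xyj; rewrite !det_diag_add -big_split mulr_sumr /=.
rewrite (bigD1 finset.set0) // [X in _ < X](bigD1 finset.set0) //=.
have h_ge0 i : 0 <= c / ((x i + y i) / 2) by rewrite ltW ?divr_gt0 ?addr_gt0.
have h_le i : (c / ((x i + y i) / 2)) ^+ 2 <= c / x i * (c / y i) by apply: sqr_div_mid_le.
have cx0 i : 0 < c / x i by rewrite divr_gt0.
have cy0 i : 0 < c / y i by rewrite divr_gt0.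
apply: ltr_leD.
  rewrite principal_mx_set0 det1 !mulr1 !(eq_bigr _ (fun i _ => mxE _ _ _ _)) /=.
  by apply: (prod_midpoint_lt h_ge0 cx0 cy0 h_le (j := j)); rewrite ?inE ?sqr_div_mid_lt.
apply: ler_sum => K _; rewrite mulrA -mulrDl ler_wpM2r //.
  exact/psd_det_ge0/psd_principal_mx.
by rewrite !(eq_bigr _ (fun i _ => mxE _ _ _ _)) /=; apply: prod_midpoint_le.
Qed.

End MidpointConvexity.

Lemma det_diag_inv_add_rev (R : realFieldType) n (T : 'M[R]_n) c (x : 'I_n -> R) :
  (forall i k, T (rev_ord i) (rev_ord k) = T i k) ->
  \det (diag_inv c (fun i => x (rev_ord i)) + T) = \det (diag_inv c x + T).
Proof.
move=> Trev; rewrite -[RHS](det_row_col_perm (perm (@rev_ord_inj n))).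
by congr (\det _); apply/matrixP => i k; rewrite !mxE !permE Trev (inj_eq rev_ord_inj).
Qed.

Section Design.
Variables (R : realType) (J : nat).

(* [Sigma_gamma / sg2 = L diag(1, 1 - rho^2, 1 - rho^2, ...) L^T] with [L i k = rho^(i - k)]
   for [k <= i]: the innovation form of the AR(1) recursion. *)
Definition ar1_lower (rho : R) : 'M[R]_J :=
  \matrix_(i, k) if (k <= i)%N then rho ^+ (i - k) else 0.
Definition ar1_innov (rho : R) (s : nat) : R := if s == 0%N then 1 else 1 - rho ^+ 2.

Lemma ar1_innov_geom rho m : \sum_(s < m.+1) rho ^+ (2 * (m - s)) * ar1_innov rho s = 1.
Proof.
elim: m => [|m IH]; first by rewrite big_ord1 /ar1_innov /= mul1r.
rewrite big_ord_recr /= subnn muln0 expr0 mul1r.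
have -> : \sum_(s < m.+1) rho ^+ (2 * (m.+1 - s)) * ar1_innov rho s =
    rho ^+ 2 * \sum_(s < m.+1) rho ^+ (2 * (m - s)) * ar1_innov rho s.
  rewrite big_distrr; apply: eq_bigr => s _ /=; rewrite mulrA -exprD.
  by congr (_ ^+ _ * _); have := ltn_ord s; lia.
by rewrite IH mulr1 /ar1_innov /= addrC subrK.
Qed.

Lemma ar1_factorE rho (i k : 'I_J) :
  (ar1_lower rho *m diag_mx (\row_s ar1_innov rho s) *m (ar1_lower rho)^T) i k
  = rho ^+ (maxn i k - minn i k).
Proof.
rewrite mul_mx_diag mxE; set m := minn i k.
have m_lt : (m < J)%N by rewrite /m gtn_min ltn_ord.
transitivity (\sum_(s < J) if (s < m.+1)%N then
   rho ^+ (maxn i k - minn i k) * (rho ^+ (2 * (m - s)) * ar1_innov rho s) else 0).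
  apply: eq_bigr => s _; rewrite !mxE.
  have [s_le|s_gt] := boolP (s < m.+1)%N.
    have [-> ->] : (s <= i)%N /\ (s <= k)%N by move: s_le; rewrite /m; lia.
    by rewrite mulrAC -exprD mulrA -exprD; congr (_ ^+ _ * _); rewrite /m; lia.
  have : ~~ ((s <= i)%N && (s <= k)%N) by move: s_gt; rewrite /m; lia.
  by case/nandP => /negPf ->; rewrite ?mul0r ?mulr0.
rewrite -big_mkcond /= -(big_ord_widen _ (fun s => rho ^+ (maxn i k - minn i k) *
   (rho ^+ (2 * (m - s)) * ar1_innov rho s))) //.
by rewrite -big_distrr /= ar1_innov_geom mulr1.
Qed.

Lemma Sigma_gamma_psd (sg2 rho : R) : 0 <= sg2 -> rho ^+ 2 <= 1 -> psd (Sigma_gamma J sg2 rho).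
Proof.
move=> sg0 rho1.
have -> : Sigma_gamma J sg2 rho =
    sg2 *: ((ar1_lower rho)^T^T *m diag_mx (\row_s ar1_innov rho s) *m (ar1_lower rho)^T).
  by apply/matrixP => i k; rewrite trmxK [RHS]mxE ar1_factorE !mxE.
apply/psd_scale/psd_congr/psd_diag => // s; rewrite mxE /ar1_innov.
by case: (s == 0%N :> nat); rewrite ?subr_ge0.
Qed.

Lemma Sigma_gamma_rev (sg2 rho : R) (i k : 'I_J) :
  Sigma_gamma J sg2 rho (rev_ord i) (rev_ord k) = Sigma_gamma J sg2 rho i k.
Proof. by rewrite !mxE; congr (_ * _ ^+ _); case: i k => [i ?] [k ?] /=; lia. Qed.

Lemma det_Minfo (A : 'M[R]_J) (se2 sg2 rho : R) (x : 'I_J -> R) : (forall i, 0 < x i) ->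
  \det (Minfo A se2 sg2 rho x) = \det A ^+ 2 / \det (diag_inv se2 x + Sigma_gamma J sg2 rho).
Proof.
move=> x0; set S := Sigma_gamma J sg2 rho; set D := M0half x.
have DinvD : D *m diag_inv se2 x *m D = se2%:M.
  apply/matrixP => i j; rewrite !mulmx_diag !mxE; congr (_ *+ _).
  by rewrite mulrAC -expr2 sqr_sqrtr ?ltW // mulrC divfK ?gt_eqF.
have D0 : \det D != 0.
  by rewrite det_diag gt_eqF // prodr_gt0 // => i _; rewrite mxE sqrtr_gt0.
rewrite /Minfo -/D -/S.
have -> : se2%:M + D *m S *m D = D *m (diag_inv se2 x + S) *m D.
  by rewrite mulmxDr mulmxDl DinvD.
rewrite !det_mulmx det_inv det_tr !det_mulmx !invfM.
set w := (\det (diag_inv se2 x + S))^-1.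
by field.
Qed.

Lemma estimable_pos (I : R) (A : 'M[R]_J) (x : 'I_J -> R) :
  is_design I x -> estimable A x -> forall i, 0 < x i.
Proof.
move=> [x0 _] [rankA subA] i.
have : \rank (M0 x)^T = J.
  by apply/eqP; rewrite eqn_leq rank_leq_col -{1}rankA -mxrank_tr mxrankS.
move/eqP; rewrite -[_ == J]/(row_full _) row_full_unit unitmxE det_tr det_diag unitfE.
rewrite lt_def x0 andbT; apply: contraNneq => xi0.
by rewrite (bigD1 i) //= mxE xi0 mul0r.
Qed.

Lemma pos_estimable (A : 'M[R]_J) (x : 'I_J -> R) :
  A \in unitmx -> (forall i, 0 < x i) -> estimable A x.
Proof.
move=> A_unit x0; split; first exact: mxrank_unit.
apply: submx_full; rewrite row_full_unit unitmxE det_tr det_diag unitfE.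
by rewrite gt_eqF // prodr_gt0 // => i _; rewrite mxE.
Qed.

Lemma is_design_mid (I : R) (x y : 'I_J -> R) :
  is_design I x -> is_design I y -> is_design I (mid x y).
Proof.
move=> [x0 xI] [y0 yI]; split; first by move=> i; rewrite divr_ge0 ?addr_ge0.
by rewrite /mid -mulr_suml big_split /= xI yI; field.
Qed.

Lemma is_design_rev (I : R) (x : 'I_J -> R) : is_design I x -> is_design I (fun i => x (rev_ord i)).
Proof. by move=> [x0 xI]; split => //; rewrite -xI [RHS](reindex_inj rev_ord_inj). Qed.

End Design.

Theorem lemma5 (R : realType) (J : nat) (se2 sg2 rho I : R) (A : 'M[R]_J)
  (xi : 'I_J -> R) :
  (0 < J)%N -> 0 < se2 -> 0 < sg2 -> 0 <= rho <= 1 ->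
  A \in unitmx -> 0 < I ->
  D_optimal A se2 sg2 rho I xi ->
  forall j : 'I_J, xi j = xi (rev_ord j).
Proof.
move=> _ se0 sg0 /andP[rho0 rho1] A_unit _ [xi_design xi_est xi_opt] j.
set S := Sigma_gamma J sg2 rho; set W := fun x => \det (diag_inv se2 x + S).
have S_psd : psd S by apply: Sigma_gamma_psd (ltW sg0) _; rewrite expr_le1.
have xi0 := estimable_pos xi_design xi_est.
pose xi_rev i := xi (rev_ord i); pose m := mid xi xi_rev.
have m0 i : 0 < m i by rewrite /m /mid divr_gt0 ?addr_gt0 ?xi0.
have W0 x : (forall i, 0 < x i) -> 0 < W x.
  by move=> x0; apply: det_diag_add_gt0 => // i; rewrite mxE divr_gt0.
have detA2 : 0 < \det A ^+ 2 by rewrite exprn_even_gt0 //= -unitfE -unitmxE.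
have := xi_opt m (is_design_mid xi_design (is_design_rev xi_design)) (pos_estimable A_unit m0).
rewrite ler_ln ?posrE ?det_Minfo ?divr_gt0 ?W0 // ler_pM2l // lef_pV2 ?posrE ?W0 // => W_le.
apply/eqP; apply: contraT => xi_neq.
have := det_diag_inv_add_mid_lt S_psd se0 xi0 (fun i => xi0 _) xi_neq.
by rewrite det_diag_inv_add_rev; [lra | exact: Sigma_gamma_rev].
Qed.
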